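(* If retreat occurs, then there exist $u,L,c>0$ with $0<u<u_-$ (when $a+b<4$, the requirement $u<u_-$ is dropped) and, for every $\epsilon>0$, a number $x_0(\epsilon)>0$, such that for every solution $\mathbf u(t)$ of the mean-field equations with $\mathbf u(0)\in[0,1]^{\mathbb Z}$: if $u_x(0)\le u$ for all $|x|\le L$, then $u_x(t)\le\epsilon$ for all $t>0$ and all $|x|\le ct-x_0(\epsilon)$.
   Context: Fix $a,b>0$ and $M\ge1$; for $x,y\in\mathbb Z$ write $y\sim x$ iff $0<|x-y|\le M$. Mean-field equations: $u_x'=(a u_x^2+\frac{b}{2M}\sum_{y\sim x}u_y^2)(1-u_x)-u_x$, $x\in\mathbb Z$. Let $r=a+b$; for $r>4$, $u_\pm=1/2\pm(1/4-1/r)^{1/2}$; for $r=4$, $u_-=u_+=1/2$. Retreat (for $r\ge4$): there are $0<u_*<u_-\le u_+<u^*\le1$ such that the solution with $u_x(0)=u^*\mathbf 1(x<0)+u_*\mathbf 1(x\ge0)$ satisfies $u_{-1}(t_0)=u_*$ for some $t_0>0$. By convention, retreat also occurs whenever $r<4$. *)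

From Stdlib Require Import Reals Lra Lia ZArith.
Open Scope R_scope.

Fixpoint nbr_sum (M : nat) (v : Z -> R) (x : Z) : R :=
  match M with
  | O => 0
  | S k => nbr_sum k v x + v (x - Z.of_nat (S k))%Z + v (x + Z.of_nat (S k))%Z
  end.

Definition mf_rhs (a b : R) (M : nat) (v : Z -> R) (x : Z) : R :=
  (a * (v x)^2 + b / (2 * INR M) * nbr_sum M (fun y => (v y)^2) x) * (1 - v x)
  - v x.

(* A solution of the mean-field equations on [0, +oo): each coordinate is
   right-continuous at 0, differentiable on (0,+oo) with the prescribed
   derivative, and the solution is bounded on compact time intervals
   (the class in which the lattice ODE is well-posed). *)
Definition mf_solution (a b : R) (M : nat) (u : Z -> R -> R) : Prop :=
  (forall x : Z, forall eps, eps > 0 ->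
     exists delta, delta > 0 /\
       forall t, 0 <= t < delta -> Rabs (u x t - u x 0) < eps) /\
  (forall x : Z, forall t, t > 0 ->
     derivable_pt_lim (u x) t (mf_rhs a b M (fun y => u y t) x)) /\
  (forall T, T >= 0 -> exists B, forall x : Z, forall t, 0 <= t <= T ->
     Rabs (u x t) <= B).

(* u_- for r >= 4 (equals 1/2 when r = 4). *)
Definition u_minus (r : R) : R := / 2 - sqrt (/ 4 - / r).
Definition u_plus (r : R) : R := / 2 + sqrt (/ 4 - / r).

Definition retreat (a b : R) (M : nat) : Prop :=
  a + b < 4 \/
  (a + b >= 4 /\
   exists ulow uhigh : R,
     0 < ulow /\ ulow < u_minus (a + b) /\ u_minus (a + b) <= u_plus (a + b) /\
     u_plus (a + b) < uhigh /\ uhigh <= 1 /\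
     exists u : Z -> R -> R, mf_solution a b M u /\
       (forall x : Z, u x 0 = if Z.ltb x 0 then uhigh else ulow) /\
       exists t0, t0 > 0 /\ u (-1)%Z t0 = ulow).

From Stdlib Require Import Reals ZArith Lra Lia Psatz Classical.
Open Scope R_scope.

(* Solutions with values in [0, 1] obey a comparison principle with finite
   speed of propagation: the right-hand side is Lipschitz with respect to the
   [M]-neighbourhood, so during a time of order [k / (a + b)] a perturbation at
   distance [k N M] is felt only with weight [2 ^ k / 2 ^ N].

   For [a + b < 4] the homogeneous supersolution [exp (- (1 - (a + b) / 4) t)]
   already gives the result.  Otherwise a relaxing homogeneous supersolution
   pushes every solution below some [uh > u_plus] after a fixed time, and a
   region where the solution is below [ul < u_minus] is a trap: on either side
   the solution lies below a translate (or reflection) of the retreating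
   solution [U], and the retreat hypothesis makes [U] drop to [ul / 2] one site
   further after a fixed time [tau].  So the trap grows by one site on each side
   every [tau], i.e. linearly in time, and inside it the solution decays
   exponentially by comparison with [ul exp (- decay_rate t)]. *)

Lemma real_induction (P : R -> Prop) (t1 t : R) :
  (forall s, t1 <= s <= t -> (forall r, t1 <= r < s -> P r) -> P s) ->
  (forall s, t1 <= s < t -> (forall r, t1 <= r <= s -> P r) ->
     exists ep, ep > 0 /\ forall r, s <= r < s + ep -> P r) ->
  forall s, t1 <= s <= t -> P s.
Proof.
  intros Hleft Hright s0 Hs0.
  set (A := fun s => t1 <= s <= t /\ forall r, t1 <= r <= s -> P r).
  assert (HA1 : A t1).
  { split; [lra|]. intros r Hr. apply Hleft; [lra|]. intros r' Hr'; lra. }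
  assert (HAb : bound A) by (exists t; intros s [Hs _]; lra).
  destruct (completeness A HAb (ex_intro _ t1 HA1)) as [sg [Hub Hlub]].
  assert (Hsg1 : t1 <= sg) by (apply Hub; exact HA1).
  assert (Hsg2 : sg <= t) by (apply Hlub; intros s [Hs _]; lra).
  assert (Hbelow : forall r, t1 <= r < sg -> P r).
  { intros r Hr. apply NNPP. intros HnP.
    assert (is_upper_bound A r).
    { intros s [_ Hs]. apply Rnot_lt_le. intros Hrs. apply HnP, Hs. lra. }
    specialize (Hlub r H). lra. }
  assert (HAsg : forall r, t1 <= r <= sg -> P r).
  { intros r Hr. destruct (Req_dec r sg) as [->|]; [|apply Hbelow; lra].
    apply Hleft; [lra | exact Hbelow]. }
  assert (Hsgt : sg = t).
  { apply NNPP. intros Hne.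
    destruct (Hright sg ltac:(lra) HAsg) as [ep [Hep Hr]].
    set (s' := Rmin (sg + ep / 2) t).
    assert (HAs : A s').
    { unfold s'. split; [pose proof (Rmin_r (sg + ep/2) t); split; [|lra]|].
      - apply Rmin_glb; lra.
      - intros r Hr'. destruct (Rle_dec r sg); [apply HAsg; lra|].
        apply Hr. pose proof (Rmin_l (sg + ep/2) t). lra. }
    specialize (Hub s' HAs). unfold s' in Hub.
    assert (sg < Rmin (sg + ep / 2) t) by (apply Rmin_glb_lt; lra). lra. }
  apply HAsg. lra.
Qed.

Lemma le_from_left (f : R -> R) (A t1 s : R) :
  t1 < s -> continuity_pt f s -> (forall r, t1 <= r < s -> f r <= A) -> f s <= A.
Proof.
  intros Hs Hc Hle. apply Rnot_lt_le. intros HA.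
  destruct (Hc (f s - A) ltac:(lra)) as [al [Hal Hr]].
  set (r := s - Rmin al (s - t1) / 2).
  assert (Hm : 0 < Rmin al (s - t1)) by (apply Rmin_pos; lra).
  pose proof (Rmin_l al (s - t1)). pose proof (Rmin_r al (s - t1)).
  assert (Hrs : Rabs (r - s) < al) by (unfold r; rewrite Rabs_left; lra).
  assert (Hfr := Hle r ltac:(unfold r; lra)).
  assert (Hne : r <> s) by (unfold r; lra).
  specialize (Hr r (conj (conj I (not_eq_sym Hne)) Hrs)). simpl in Hr. unfold R_dist in Hr.
  apply Rabs_def2 in Hr. lra.
Qed.

Lemma le_to_right (f : R -> R) (A s d : R) :
  derivable_pt_lim f s d -> f s <= A -> (f s = A -> d < 0) ->
  exists ep, ep > 0 /\ forall r, s <= r < s + ep -> f r <= A.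
Proof.
  intros Hd Hfs Hslope. destruct (Req_dec (f s) A) as [Heq|Hlt].
  - specialize (Hslope Heq).
    destruct (Hd (- d) ltac:(lra)) as [[ep Hep] Hq].
    exists ep. split; [exact Hep|]. intros r Hr.
    destruct (Req_dec r s) as [->|Hne]; [lra|].
    specialize (Hq (r - s) ltac:(lra) ltac:(rewrite Rabs_right; simpl; lra)).
    replace (s + (r - s)) with r in Hq by ring.
    apply Rabs_def2 in Hq. destruct Hq as [Hq _].
    assert (Hdiff : (f r - f s) / (r - s) < 0) by lra.
    assert (f r - f s < 0).
    { replace (f r - f s) with ((f r - f s) / (r - s) * (r - s)) by (field; lra). nra. }
    lra.
  - destruct (derivable_continuous_pt f s (exist _ d Hd) (A - f s) ltac:(lra))
      as [al [Hal Hr]].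
    exists al. split; [exact Hal|]. intros r Hr'.
    destruct (Req_dec r s) as [->|Hne]; [lra|].
    assert (Hrs : Rabs (r - s) < al) by (rewrite Rabs_right; lra).
    specialize (Hr r (conj (conj I (not_eq_sym Hne)) Hrs)).
    simpl in Hr. unfold R_dist in Hr. apply Rabs_def2 in Hr. lra.
Qed.

(* The barrier [delta + eta + (K + eta) (r - t1)] cannot be crossed: at a first
   touching point [g > delta] forces a slope [<= K < K + eta]. *)
Lemma barrier_bound (g : R -> R) (t1 t delta K : R) :
  t1 <= t -> 0 <= K ->
  (forall eps, eps > 0 -> exists eta, eta > 0 /\
      forall s, t1 <= s < t1 + eta -> Rabs (g s - g t1) < eps) ->
  (forall s, t1 < s <= t -> exists d, derivable_pt_lim g s d /\ (g s > delta -> d <= K)) ->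
  g t1 <= delta ->
  g t <= delta + K * (t - t1).
Proof.
  intros Ht HK Hrc Hd Hg1.
  apply Rle_plus_epsilon. intros eps Heps.
  set (eta := eps / (t - t1 + 1)).
  assert (Heta : eta > 0) by (apply Rdiv_lt_0_compat; lra).
  set (h := fun r => g r - (K + eta) * r).
  set (A := delta + eta - (K + eta) * t1).
  assert (Hh : forall s, t1 < s <= t -> exists d, derivable_pt_lim h s d /\ (h s = A -> d < 0)).
  { intros s Hs. destruct (Hd s Hs) as [d [Hds HdK]].
    exists (d - (K + eta) * 1). split.
    - apply derivable_pt_lim_minus; [exact Hds|].
      apply derivable_pt_lim_scal, derivable_pt_lim_id.
    - intros HA. unfold h, A in HA.
      assert (g s > delta) by nra. specialize (HdK H). lra. }
  assert (Hinv : forall s, t1 <= s <= t -> h s <= A).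
  { apply real_induction.
    - intros s Hs Hbefore. destruct (Req_dec s t1) as [->|Hne].
      + unfold h, A. lra.
      + destruct (Hh s ltac:(lra)) as [d [Hds _]].
        apply (le_from_left h A t1 s); [lra| |exact Hbefore].
        exact (derivable_continuous_pt h s (exist _ d Hds)).
    - intros s Hs Hupto. destruct (Req_dec s t1) as [->|Hne].
      + destruct (Hrc eta Heta) as [e [He Hr]].
        exists e. split; [exact He|]. intros r Hr'.
        specialize (Hr r Hr'). apply Rabs_def2 in Hr. unfold h, A.
        assert ((K + eta) * (r - t1) >= 0) by (apply Rle_ge, Rmult_le_pos; lra). nra.
      + destruct (Hh s ltac:(lra)) as [d [Hds Hslope]].
        exact (le_to_right h A s d Hds (Hupto s ltac:(lra)) Hslope). }
  specialize (Hinv t ltac:(lra)). unfold h, A in Hinv.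
  assert (eta * (t - t1 + 1) = eps) by (unfold eta; field; lra).
  nra.
Qed.

Lemma pow2_pos (n : nat) : 0 < 2 ^ n.
Proof. apply pow_lt; lra. Qed.

Lemma pow2_gt (n : nat) : INR n < 2 ^ n.
Proof.
  induction n as [|n IH]; [simpl; lra|].
  rewrite S_INR. simpl. pose proof (pos_INR n). pose proof (pow_R1_Rle 2 n). lra.
Qed.

Definition natup (y : R) : nat := Z.to_nat (up y).

Lemma natup_ge y : y <= INR (natup y).
Proof.
  unfold natup. destruct (archimed y) as [H1 H2].
  destruct (Z_lt_le_dec (up y) 0) as [Hl|Hl].
  - replace (Z.to_nat (up y)) with 0%nat by lia. simpl. apply IZR_lt in Hl. lra.
  - rewrite INR_IZR_INZ, Z2Nat.id by lia. lra.
Qed.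

Lemma pow2_div_pow2_natup_le (k : nat) d : d > 0 -> 2 ^ k / 2 ^ natup (2 ^ k / d) <= d.
Proof.
  intros Hd. pose proof (natup_ge (2 ^ k / d)). pose proof (pow2_gt (natup (2 ^ k / d))).
  pose proof (pow2_pos (natup (2 ^ k / d))).
  set (N := natup (2 ^ k / d)) in *.
  assert (2 ^ k <= INR N * d).
  { apply (Rmult_le_compat_r d) in H; [|lra].
    replace (2 ^ k / d * d) with (2 ^ k) in H by (field; lra). exact H. }
  unfold Rdiv. apply (Rmult_le_reg_r (2 ^ N)); [lra|].
  rewrite Rmult_assoc, Rinv_l by lra. nra.
Qed.

Section FinitePropagation.

Variables (D : Z -> R -> R) (rad : Z) (C h : R).
Hypothesis rad_ge0 : (0 <= rad)%Z.
Hypothesis C_ge0 : 0 <= C.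
Hypothesis h_pos : 0 < h.
Hypothesis Ch_le_half : C * h <= / 2.
Hypothesis D_le1 : forall x t, 0 <= t -> D x t <= 1.
Hypothesis D_local : forall x t1 t dl E, 0 <= t1 <= t -> 0 <= dl -> 0 <= E ->
  D x t1 <= dl ->
  (forall s z, t1 <= s <= t -> (Z.abs (z - x) <= rad)%Z -> D z s <= E) ->
  D x t <= dl + C * (t - t1) * E.

(* Induction on [n]: the neighbours obey the bound for [n - 1], and the
   factor [C h <= 1/2] halves the error term [/ 2 ^ n] at each layer. *)
Lemma propagation_step (n : nat) x T0 dl : 0 <= T0 -> 0 <= dl ->
  (forall z, (Z.abs (z - x) <= Z.of_nat n * rad)%Z -> D z T0 <= dl) ->
  forall s, 0 <= s <= h -> D x (T0 + s) <= 2 * dl + / 2 ^ n.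
Proof.
  revert x T0 dl.
  induction n as [|n IH]; intros x T0 dl HT0 Hdl Hball s Hs.
  - rewrite pow_O, Rinv_1. specialize (D_le1 x (T0 + s) ltac:(lra)). lra.
  - set (E := 2 * dl + / 2 ^ n).
    assert (HE : 0 <= E) by (pose proof (Rinv_0_lt_compat _ (pow2_pos n)); unfold E; lra).
    assert (Hx : D x T0 <= dl) by (apply Hball; rewrite Z.sub_diag; lia).
    assert (Hnbr : forall s' z, T0 <= s' <= T0 + s -> (Z.abs (z - x) <= rad)%Z -> D z s' <= E).
    { intros s' z Hs' Hz. replace s' with (T0 + (s' - T0)) by ring.
      apply IH; [lra | lra | | lra].
      intros z' Hz'. apply Hball. rewrite Nat2Z.inj_succ. lia. }
    pose proof (D_local x T0 (T0 + s) dl E ltac:(lra) Hdl HE Hx Hnbr) as Hm.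
    assert (Hcs : C * s <= / 2) by (apply Rle_trans with (C * h); [apply Rmult_le_compat_l|]; lra).
    replace (T0 + s - T0) with s in Hm by ring.
    assert (C * s * E <= / 2 * E) by (apply Rmult_le_compat_r; lra).
    simpl. rewrite Rinv_mult. unfold E in *. lra.
Qed.

Lemma finite_propagation (k N : nat) x T0 dl : 0 <= T0 -> 0 <= dl ->
  (forall z, (Z.abs (z - x) <= Z.of_nat k * Z.of_nat N * rad)%Z -> D z T0 <= dl) ->
  forall s, 0 <= s <= INR k * h -> D x (T0 + s) <= 2 ^ k * (dl + / 2 ^ N).
Proof.
  assert (HiN : 0 < / 2 ^ N) by apply Rinv_0_lt_compat, pow2_pos.
  revert x T0 dl.
  induction k as [|k IH]; intros x T0 dl HT0 Hdl Hball s Hs.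
  - simpl in Hs. replace s with 0 by lra. rewrite Rplus_0_r. simpl.
    assert (D x T0 <= dl) by (apply Hball; rewrite Z.sub_diag; lia). lra.
  - rewrite S_INR in Hs.
    assert (Hball' : forall z, (Z.abs (z - x) <= Z.of_nat N * rad)%Z -> D z T0 <= dl).
    { intros z Hz. apply Hball. rewrite Nat2Z.inj_succ. nia. }
    destruct (Rle_dec s h) as [Hsh|Hsh].
    + pose proof (propagation_step N x T0 dl HT0 Hdl Hball' s ltac:(lra)).
      assert (1 <= 2 ^ k) by (apply pow_R1_Rle; lra).
      simpl. nra.
    + set (dl' := 2 * dl + / 2 ^ N).
      replace (T0 + s) with ((T0 + h) + (s - h)) by ring.
      apply Rle_trans with (2 ^ k * (dl' + / 2 ^ N)); [|unfold dl'; simpl; lra].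
      apply IH; [lra | unfold dl'; lra | | lra].
      intros z Hz. apply (propagation_step N z T0 dl HT0 Hdl); [|lra].
      intros z' Hz'. apply Hball. rewrite Nat2Z.inj_succ. nia.
Qed.

End FinitePropagation.

Lemma nbr_sum_sq_nonneg (k : nat) (v : Z -> R) x : 0 <= nbr_sum k (fun y => v y ^ 2) x.
Proof.
  induction k as [|k IH]; cbn [nbr_sum]; [lra|].
  pose proof (pow2_ge_0 (v (x - Z.of_nat (S k))%Z)).
  pose proof (pow2_ge_0 (v (x + Z.of_nat (S k))%Z)). lra.
Qed.

Lemma nbr_sum_const (k : nat) c x : nbr_sum k (fun _ => c) x = 2 * INR k * c.
Proof. induction k as [|k IH]; cbn [nbr_sum]; [simpl; lra|]. rewrite IH, S_INR. ring. Qed.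

Lemma nbr_sum_shift (k : nat) (v : Z -> R) c x :
  nbr_sum k (fun y => v (y + c)%Z) x = nbr_sum k v (x + c)%Z.
Proof.
  induction k as [|k IH]; cbn [nbr_sum]; [reflexivity|]. rewrite IH.
  replace (x - Z.of_nat (S k) + c)%Z with (x + c - Z.of_nat (S k))%Z by lia.
  replace (x + Z.of_nat (S k) + c)%Z with (x + c + Z.of_nat (S k))%Z by lia.
  reflexivity.
Qed.

Lemma nbr_sum_reflect (k : nat) (v : Z -> R) x :
  nbr_sum k (fun y => v (- y)%Z) x = nbr_sum k v (- x)%Z.
Proof.
  induction k as [|k IH]; cbn [nbr_sum]; [reflexivity|]. rewrite IH.
  replace (- (x - Z.of_nat (S k)))%Z with (- x + Z.of_nat (S k))%Z by lia.
  replace (- (x + Z.of_nat (S k)))%Z with (- x - Z.of_nat (S k))%Z by lia.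
  ring.
Qed.

Lemma nbr_sum_sq_sub_le (k : nat) (v w : Z -> R) x E :
  (forall y, 0 <= v y <= 1) -> (forall y, 0 <= w y <= 1) -> 0 <= E ->
  (forall y, (Z.abs (y - x) <= Z.of_nat k)%Z -> v y - w y <= E) ->
  nbr_sum k (fun y => v y ^ 2) x - nbr_sum k (fun y => w y ^ 2) x <= 4 * INR k * E.
Proof.
  intros Hv Hw HE. induction k as [|k IH]; intros Hnbr; cbn [nbr_sum]; [simpl; lra|].
  rewrite S_INR.
  assert (IH' := IH ltac:(intros y Hy; apply Hnbr; lia)).
  assert (Hsq : forall y, (Z.abs (y - x) <= Z.of_nat (S k))%Z -> v y ^ 2 - w y ^ 2 <= 2 * E).
  { intros y Hy. specialize (Hnbr y Hy). pose proof (Hv y). pose proof (Hw y). nra. }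
  pose proof (Hsq (x - Z.of_nat (S k))%Z ltac:(lia)).
  pose proof (Hsq (x + Z.of_nat (S k))%Z ltac:(lia)).
  lra.
Qed.

Lemma mf_rhs_const a b (M : nat) c x : (1 <= M)%nat ->
  mf_rhs a b M (fun _ => c) x = (a + b) * c ^ 2 * (1 - c) - c.
Proof.
  intros HM. unfold mf_rhs. rewrite nbr_sum_const.
  assert (INR M >= 1) by (apply Rle_ge, (le_INR 1); exact HM).
  field. lra.
Qed.

Lemma mf_rhs_shift a b M (v : Z -> R) c x :
  mf_rhs a b M (fun y => v (y + c)%Z) x = mf_rhs a b M v (x + c)%Z.
Proof. unfold mf_rhs. rewrite (nbr_sum_shift M (fun y => v y ^ 2)). reflexivity. Qed.

Lemma mf_rhs_reflect a b M (v : Z -> R) x :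
  mf_rhs a b M (fun y => v (- y)%Z) x = mf_rhs a b M v (- x)%Z.
Proof. unfold mf_rhs. rewrite (nbr_sum_reflect M (fun y => v y ^ 2)). reflexivity. Qed.

Section RhsEstimates.

Variables (a b : R) (M : nat).
Hypothesis ha : a > 0.
Hypothesis hb : b > 0.
Hypothesis hM : (1 <= M)%nat.

Lemma mf_gain_nonneg (v : Z -> R) x :
  0 <= a * v x ^ 2 + b / (2 * INR M) * nbr_sum M (fun y => v y ^ 2) x.
Proof.
  assert (INR M >= 1) by (apply Rle_ge, (le_INR 1); exact hM).
  pose proof (nbr_sum_sq_nonneg M v x). pose proof (pow2_ge_0 (v x)).
  assert (0 <= b / (2 * INR M)) by (apply Rlt_le, Rdiv_lt_0_compat; lra).
  nra.
Qed.

Lemma mf_rhs_pos_below0 (v : Z -> R) x : v x < 0 -> 0 < mf_rhs a b M v x.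
Proof. intros Hv. pose proof (mf_gain_nonneg v x). unfold mf_rhs. nra. Qed.

Lemma mf_rhs_neg_above1 (v : Z -> R) x : 1 < v x -> mf_rhs a b M v x < 0.
Proof. intros Hv. pose proof (mf_gain_nonneg v x). unfold mf_rhs. nra. Qed.

Lemma mf_rhs_sub_le (v w : Z -> R) x E :
  (forall y, 0 <= v y <= 1) -> (forall y, 0 <= w y <= 1) -> w x < v x -> 0 <= E ->
  (forall y, (Z.abs (y - x) <= Z.of_nat M)%Z -> v y - w y <= E) ->
  mf_rhs a b M v x - mf_rhs a b M w x <= 2 * (a + b) * E.
Proof.
  intros Hv Hw Hlt HE Hnbr. unfold mf_rhs.
  pose proof (nbr_sum_sq_sub_le M v w x E Hv Hw HE Hnbr) as HS.
  pose proof (nbr_sum_sq_nonneg M w x) as HS'.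
  set (S := nbr_sum M (fun y => v y ^ 2) x) in *.
  set (S' := nbr_sum M (fun y => w y ^ 2) x) in *.
  set (p := v x) in *. set (q := w x) in *.
  assert (Hp := Hv x). assert (Hq := Hw x). fold p q in Hp, Hq.
  assert (Hpq : p - q <= E) by (apply Hnbr; rewrite Z.sub_diag; lia).
  assert (HMr : INR M >= 1) by (apply Rle_ge, (le_INR 1); exact hM).
  set (be := b / (2 * INR M)).
  assert (Hbe : be > 0) by (unfold be; apply Rdiv_lt_0_compat; lra).
  assert (Hbe4 : be * (4 * INR M * E) = 2 * b * E) by (unfold be; field; lra).
  assert (Hloc : p ^ 2 * (1 - p) - q ^ 2 * (1 - q) <= 2 * (p - q)).
  { replace (p ^ 2 * (1 - p) - q ^ 2 * (1 - q))
      with ((p - q) * (p + q - (p * p + p * q + q * q))) by ring.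
    assert (p + q - (p * p + p * q + q * q) <= 2) by nra. nra. }
  assert (Hnl : S * (1 - p) - S' * (1 - q) <= 4 * INR M * E).
  { replace (S * (1 - p) - S' * (1 - q)) with ((S - S') * (1 - p) - S' * (p - q)) by ring.
    assert (0 <= S' * (p - q)) by (apply Rmult_le_pos; lra).
    assert ((S - S') * (1 - p) <= 4 * INR M * E).
    { destruct (Rle_dec (S - S') 0); [nra|].
      apply Rle_trans with ((S - S') * 1); [apply Rmult_le_compat_l|]; lra. }
    lra. }
  assert (a * (p ^ 2 * (1 - p) - q ^ 2 * (1 - q)) <= a * (2 * E)) by (apply Rmult_le_compat_l; lra).
  assert (be * (S * (1 - p) - S' * (1 - q)) <= be * (4 * INR M * E)) by (apply Rmult_le_compat_l; lra).
  fold be.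
  replace ((a * p ^ 2 + be * S) * (1 - p) - p - ((a * q ^ 2 + be * S') * (1 - q) - q))
    with (a * (p ^ 2 * (1 - p) - q ^ 2 * (1 - q)) + be * (S * (1 - p) - S' * (1 - q)) - (p - q))
    by ring.
  lra.
Qed.

End RhsEstimates.

Definition right_cont_at0 (g : R -> R) : Prop :=
  forall eps, eps > 0 -> exists delta, delta > 0 /\
    forall t, 0 <= t < delta -> Rabs (g t - g 0) < eps.

Lemma right_cont_at (g : R -> R) t1 : 0 <= t1 -> right_cont_at0 g ->
  (t1 > 0 -> exists d, derivable_pt_lim g t1 d) ->
  forall eps, eps > 0 -> exists eta, eta > 0 /\
    forall s, t1 <= s < t1 + eta -> Rabs (g s - g t1) < eps.
Proof.
  intros Ht1 Hrc Hd eps He. destruct (Req_dec t1 0) as [->|Hne].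
  - destruct (Hrc eps He) as [dl [Hdl Hr]]. exists dl. split; [exact Hdl|].
    intros s Hs. apply Hr. lra.
  - destruct (Hd ltac:(lra)) as [d Hdd].
    destruct (derivable_continuous_pt g t1 (exist _ d Hdd) eps He) as [al [Hal Hr]].
    exists al. split; [exact Hal|]. intros s Hs.
    destruct (Req_dec s t1) as [->|Hst]; [rewrite Rminus_diag, Rabs_R0; lra|].
    assert (Hsa : Rabs (s - t1) < al) by (rewrite Rabs_right; lra).
    exact (Hr s (conj (conj I (not_eq_sym Hst)) Hsa)).
Qed.

Definition mf_subsolution a b M (v : Z -> R -> R) : Prop :=
  (forall x, right_cont_at0 (v x)) /\
  (forall x t, t > 0 -> exists d, derivable_pt_lim (v x) t d /\
     d <= mf_rhs a b M (fun y => v y t) x) /\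
  (forall x t, 0 <= t -> 0 <= v x t <= 1).

Definition mf_supersolution a b M (v : Z -> R -> R) : Prop :=
  (forall x, right_cont_at0 (v x)) /\
  (forall x t, t > 0 -> exists d, derivable_pt_lim (v x) t d /\
     d >= mf_rhs a b M (fun y => v y t) x) /\
  (forall x t, 0 <= t -> 0 <= v x t <= 1).

Definition mf_unit_solution a b M (v : Z -> R -> R) : Prop :=
  (forall x, right_cont_at0 (v x)) /\
  (forall x t, t > 0 -> derivable_pt_lim (v x) t (mf_rhs a b M (fun y => v y t) x)) /\
  (forall x t, 0 <= t -> 0 <= v x t <= 1).

Lemma mf_unit_solution_sub a b M v : mf_unit_solution a b M v -> mf_subsolution a b M v.
Proof.
  intros [H1 [H2 H3]]. split; [exact H1|]. split; [|exact H3].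
  intros x t Ht. eexists. split; [apply H2; exact Ht | lra].
Qed.

Lemma mf_unit_solution_super a b M v : mf_unit_solution a b M v -> mf_supersolution a b M v.
Proof.
  intros [H1 [H2 H3]]. split; [exact H1|]. split; [|exact H3].
  intros x t Ht. eexists. split; [apply H2; exact Ht | lra].
Qed.

Lemma mf_unit_solution_shift a b M u T : 0 <= T ->
  mf_unit_solution a b M u -> mf_unit_solution a b M (fun x t => u x (t + T)).
Proof.
  intros HT [H1 [H2 H3]]. split; [|split].
  - intros x eps He.
    destruct (right_cont_at (u x) T HT (H1 x) ltac:(intros; eexists; apply H2; auto) eps He)
      as [e [He' Hr]].
    exists e. split; [exact He'|]. intros t Ht. rewrite Rplus_0_l. apply Hr. lra.
  - intros x t Ht eps He.
    destruct (H2 x (t + T) ltac:(lra) eps He) as [dl Hdl].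
    exists dl. intros hh Hh Hhh. replace (t + hh + T) with (t + T + hh) by ring. apply Hdl; auto.
  - intros x t Ht. apply H3. lra.
Qed.

Lemma mf_unit_solution_translate a b M u c :
  mf_unit_solution a b M u -> mf_unit_solution a b M (fun x t => u (x + c)%Z t).
Proof.
  intros [H1 [H2 H3]]. split; [|split]; intros x.
  - apply H1.
  - intros t Ht. cbv beta. rewrite (mf_rhs_shift a b M (fun y => u y t)). apply H2. exact Ht.
  - apply H3.
Qed.

Lemma mf_unit_solution_reflect a b M u :
  mf_unit_solution a b M u -> mf_unit_solution a b M (fun x t => u (- x)%Z t).
Proof.
  intros [H1 [H2 H3]]. split; [|split]; intros x.
  - apply H1.
  - intros t Ht. cbv beta. rewrite (mf_rhs_reflect a b M (fun y => u y t)). apply H2. exact Ht.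
  - apply H3.
Qed.

Definition propagation_steps (a b tau : R) : nat := natup (4 * (a + b) * tau).

(* A perturbation outside this radius changes a solution by at most [delta]
   during a time [tau]. *)
Definition propagation_radius (a b : R) (M : nat) (tau delta : R) : Z :=
  let k := propagation_steps a b tau in
  (Z.of_nat k * Z.of_nat (natup (2 ^ k / delta)) * Z.of_nat M)%Z.

Lemma propagation_radius_nonneg a b M tau delta : (0 <= propagation_radius a b M tau delta)%Z.
Proof. unfold propagation_radius. lia. Qed.

Lemma u_minus_plus_bounds r : r >= 4 -> 0 < u_minus r /\ u_minus r <= u_plus r /\ u_plus r < 1.
Proof.
  intros Hr. unfold u_minus, u_plus.
  assert (H0 : 0 <= / 4 - / r) by (pose proof (Rinv_le_contravar 4 r ltac:(lra) ltac:(lra)); lra).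
  pose proof (sqrt_pos (/ 4 - / r)). pose proof (sqrt_sqrt (/ 4 - / r) H0).
  pose proof (Rinv_0_lt_compat r ltac:(lra)).
  assert (sqrt (/ 4 - / r) < / 2) by nra.
  lra.
Qed.

Lemma logistic_factor r p : r >= 4 ->
  1 - r * p * (1 - p) = r * (p - u_minus r) * (p - u_plus r).
Proof.
  intros Hr. unfold u_minus, u_plus.
  assert (H0 : 0 <= / 4 - / r) by (pose proof (Rinv_le_contravar 4 r ltac:(lra) ltac:(lra)); lra).
  replace (r * (p - (/ 2 - sqrt (/ 4 - / r))) * (p - (/ 2 + sqrt (/ 4 - / r))))
    with (r * (p * p - p + / 4 - sqrt (/ 4 - / r) * sqrt (/ 4 - / r))) by field.
  rewrite sqrt_sqrt by exact H0. field. lra.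
Qed.

Lemma derivable_pt_lim_exp_neg_mul k t :
  derivable_pt_lim (fun t => exp (- k * t)) t (- k * exp (- k * t)).
Proof.
  replace (- k * exp (- k * t)) with (exp (- k * t) * (- k * 1)) by ring.
  apply (derivable_pt_lim_comp (mult_real_fct (- k) id) exp);
    [apply derivable_pt_lim_scal, derivable_pt_lim_id | apply derivable_pt_lim_exp].
Qed.

Lemma exp_le_exp x y : x <= y -> exp x <= exp y.
Proof. intros [H|H]; [left; apply exp_increasing; exact H | rewrite H; lra]. Qed.

Lemma exp_neg_mul_le1 k t : 0 <= k -> 0 <= t -> 0 < exp (- k * t) <= 1.
Proof. intros Hk Ht. split; [apply exp_pos|]. rewrite <- exp_0. apply exp_le_exp. nra. Qed.

Definition decay_time (k d : R) : R := Rabs (ln d) / k.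

Lemma decay_time_nonneg k d : k > 0 -> 0 <= decay_time k d.
Proof. intros Hk. apply Rle_mult_inv_pos; [apply Rabs_pos | lra]. Qed.

Lemma exp_le_after_decay_time k d s : k > 0 -> d > 0 -> decay_time k d <= s ->
  exp (- k * s) <= d.
Proof.
  intros Hk Hd Hs. unfold decay_time in Hs. rewrite <- (exp_ln d Hd). apply exp_le_exp.
  apply (Rmult_le_compat_l k) in Hs; [|lra].
  replace (k * (Rabs (ln d) / k)) with (Rabs (ln d)) in Hs by (field; lra).
  pose proof (Rle_abs (- ln d)). rewrite Rabs_Ropp in H. lra.
Qed.

Definition decay_rate (r l : R) : R := r * (u_minus r - l) * (u_plus r - l).

Lemma decay_rate_pos r l : r >= 4 -> l < u_minus r -> decay_rate r l > 0.
Proof.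
  intros Hr Hl. destruct (u_minus_plus_bounds r Hr) as [? [? ?]].
  unfold decay_rate. repeat apply Rmult_lt_0_compat; lra.
Qed.

Section Comparison.

Variables (a b : R) (M : nat).
Hypothesis ha : a > 0.
Hypothesis hb : b > 0.
Hypothesis hM : (1 <= M)%nat.

Lemma mf_solution_unit u : mf_solution a b M u -> (forall x, 0 <= u x 0 <= 1) ->
  mf_unit_solution a b M u.
Proof.
  intros [H1 [H2 _]] H0. split; [exact H1|]. split; [exact H2|].
  intros x t Ht. specialize (H0 x). split.
  - cut (- u x t <= 0 + 0 * (t - 0)); [lra|].
    apply (barrier_bound (fun s => - u x s)); [lra | lra | | | lra].
    + intros eps He. destruct (H1 x eps He) as [dl [Hdl Hr]].
      exists dl. split; [exact Hdl|]. intros s Hs.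
      replace (- u x s - - u x 0) with (- (u x s - u x 0)) by ring.
      rewrite Rabs_Ropp. apply Hr. lra.
    + intros s Hs. eexists. split; [apply derivable_pt_lim_opp, H2; lra|].
      intros Hneg. pose proof (mf_rhs_pos_below0 a b M ha hb hM (fun y => u y s) x). lra.
  - cut (u x t <= 1 + 0 * (t - 0)); [lra|].
    apply (barrier_bound (u x)); [lra | lra | | | lra].
    + intros eps He. destruct (H1 x eps He) as [dl [Hdl Hr]].
      exists dl. split; [exact Hdl|]. intros s Hs. apply Hr. lra.
    + intros s Hs. eexists. split; [apply H2; lra|].
      intros Hgt. pose proof (mf_rhs_neg_above1 a b M ha hb hM (fun y => u y s) x). lra.
Qed.

Lemma sub_super_gap_local v W : mf_subsolution a b M v -> mf_supersolution a b M W ->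
  forall x t1 t dl E, 0 <= t1 <= t -> 0 <= dl -> 0 <= E -> v x t1 - W x t1 <= dl ->
  (forall s z, t1 <= s <= t -> (Z.abs (z - x) <= Z.of_nat M)%Z -> v z s - W z s <= E) ->
  v x t - W x t <= dl + 2 * (a + b) * (t - t1) * E.
Proof.
  intros [Hv1 [Hv2 Hv3]] [Hw1 [Hw2 Hw3]] x t1 t dl E Ht Hdl HE Hx Hnbr.
  replace (dl + 2 * (a + b) * (t - t1) * E) with (dl + 2 * (a + b) * E * (t - t1)) by ring.
  apply (barrier_bound (fun s => v x s - W x s)); [lra | apply Rmult_le_pos; lra | | | exact Hx].
  - intros eps He.
    destruct (right_cont_at (v x) t1 ltac:(lra) (Hv1 x)
      ltac:(intros Ht1; destruct (Hv2 x t1 Ht1) as [d [Hd _]]; eauto) (eps / 2) ltac:(lra))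
      as [e1 [He1 H1]].
    destruct (right_cont_at (W x) t1 ltac:(lra) (Hw1 x)
      ltac:(intros Ht1; destruct (Hw2 x t1 Ht1) as [d [Hd _]]; eauto) (eps / 2) ltac:(lra))
      as [e2 [He2 H2]].
    exists (Rmin e1 e2). split; [apply Rmin_pos; lra|].
    intros s Hs. pose proof (Rmin_l e1 e2). pose proof (Rmin_r e1 e2).
    specialize (H1 s ltac:(lra)). specialize (H2 s ltac:(lra)).
    apply Rabs_def2 in H1. apply Rabs_def2 in H2. apply Rabs_def1; lra.
  - intros s Hs.
    destruct (Hv2 x s ltac:(lra)) as [dv [Hdv Hdvle]].
    destruct (Hw2 x s ltac:(lra)) as [dw [Hdw Hdwge]].
    exists (dv - dw). split; [apply derivable_pt_lim_minus; assumption|].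
    intros Hgt.
    pose proof (mf_rhs_sub_le a b M ha hb hM (fun y => v y s) (fun y => W y s) x E
      ltac:(intros; apply Hv3; lra) ltac:(intros; apply Hw3; lra) ltac:(lra) HE
      ltac:(intros z Hz; apply (Hnbr s z); [lra | exact Hz])).
    lra.
Qed.

Lemma comparison_local v W tau delta : 0 <= tau -> delta > 0 ->
  mf_subsolution a b M v -> mf_supersolution a b M W ->
  forall T x, 0 <= T ->
  (forall z, (Z.abs (z - x) <= propagation_radius a b M tau delta)%Z -> v z T <= W z T) ->
  forall s, 0 <= s <= tau -> v x (T + s) <= W x (T + s) + delta.
Proof.
  intros Htau Hdelta Hv HW T x HT Hball s Hs.
  unfold propagation_radius in Hball. cbv zeta in Hball.
  set (k := propagation_steps a b tau) in *.
  set (N := natup (2 ^ k / delta)) in *.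
  assert (Hsk : s <= INR k * / (4 * (a + b))).
  { pose proof (natup_ge (4 * (a + b) * tau)). fold (propagation_steps a b tau) k in H.
    apply (Rmult_le_reg_l (4 * (a + b))); [lra|].
    replace (4 * (a + b) * (INR k * / (4 * (a + b)))) with (INR k) by (field; lra). nra. }
  pose proof (finite_propagation (fun x t => v x t - W x t) (Z.of_nat M) (2 * (a + b))
    (/ (4 * (a + b))) ltac:(lia) ltac:(lra) ltac:(apply Rinv_0_lt_compat; lra)
    ltac:(right; field; lra)
    ltac:(intros z t Ht; destruct Hv as [_ [_ Hv3]]; destruct HW as [_ [_ Hw3]];
          specialize (Hv3 z t Ht); specialize (Hw3 z t Ht); lra)
    (sub_super_gap_local v W Hv HW) k N x T 0 HT (Rle_refl 0)
    ltac:(intros z Hz; specialize (Hball z Hz); lra) s ltac:(lra)) as Hprop.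
  pose proof (pow2_div_pow2_natup_le k delta Hdelta). fold N in H.
  cbv beta in Hprop. rewrite Rplus_0_l in Hprop. unfold Rdiv in H. lra.
Qed.

Lemma comparison v W : mf_subsolution a b M v -> mf_supersolution a b M W ->
  forall T, 0 <= T -> (forall z, v z T <= W z T) -> forall x t, T <= t -> v x t <= W x t.
Proof.
  intros Hv HW T HT H0 x t Ht. apply Rle_plus_epsilon. intros delta Hdelta.
  replace t with (T + (t - T)) by ring.
  apply (comparison_local v W (t - T) delta); auto; lra.
Qed.

Lemma homogeneous_supersolution (g g' : R -> R) :
  (forall t, 0 <= t -> derivable_pt_lim g t (g' t)) ->
  (forall t, 0 <= t -> 0 <= g t <= 1) ->
  (forall t, 0 <= t -> g' t >= (a + b) * g t ^ 2 * (1 - g t) - g t) ->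
  mf_supersolution a b M (fun _ t => g t).
Proof.
  intros Hd Hrange Hg. split; [|split].
  - intros x eps He.
    destruct (derivable_continuous_pt g 0 (exist _ _ (Hd 0 (Rle_refl 0))) eps He)
      as [al [Hal Hr]].
    exists al. split; [exact Hal|]. intros t Ht.
    destruct (Req_dec t 0) as [->|Hne]; [rewrite Rminus_diag, Rabs_R0; lra|].
    assert (Hta : Rabs (t - 0) < al) by (rewrite Rminus_0_r, Rabs_right; lra).
    exact (Hr t (conj (conj I (not_eq_sym Hne)) Hta)).
  - intros x t Ht. exists (g' t). split; [apply Hd; lra|].
    rewrite (mf_rhs_const a b M (g t) x hM). apply Hg. lra.
  - intros x. exact Hrange.
Qed.

Lemma constant_supersolution c : a + b >= 4 -> 0 <= c <= 1 ->
  c <= u_minus (a + b) \/ u_plus (a + b) <= c -> mf_supersolution a b M (fun _ _ => c).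
Proof.
  intros Hr Hc Hout.
  apply (homogeneous_supersolution (fun _ => c) (fun _ => 0));
    [intros; apply derivable_pt_lim_const | intros; exact Hc|].
  intros t _.
  replace ((a + b) * c ^ 2 * (1 - c) - c) with (- c * (1 - (a + b) * c * (1 - c))) by ring.
  rewrite logistic_factor by exact Hr.
  assert (0 <= (c - u_minus (a + b)) * (c - u_plus (a + b))).
  { destruct (u_minus_plus_bounds _ Hr) as [_ [? _]]. destruct Hout; nra. }
  assert (0 <= c * (a + b) * ((c - u_minus (a + b)) * (c - u_plus (a + b)))).
  { apply Rmult_le_pos; [apply Rmult_le_pos|]; lra. }
  nra.
Qed.

Lemma decay_supersolution l c0 : a + b >= 4 -> 0 <= c0 <= l -> l < u_minus (a + b) ->
  mf_supersolution a b M (fun _ t => c0 * exp (- decay_rate (a + b) l * t)).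
Proof.
  intros Hr Hc Hl. destruct (u_minus_plus_bounds _ Hr) as [Hum [Hmp Hup]].
  set (k := decay_rate (a + b) l).
  assert (Hk : 0 <= k) by (apply Rlt_le, decay_rate_pos; lra).
  apply (homogeneous_supersolution _ (fun t => c0 * (- k * exp (- k * t))));
    [intros t _; apply derivable_pt_lim_scal, derivable_pt_lim_exp_neg_mul
    |intros t Ht; pose proof (exp_neg_mul_le1 k t Hk Ht); split; nra|].
  intros t Ht. pose proof (exp_neg_mul_le1 k t Hk Ht).
  set (g := c0 * exp (- k * t)).
  assert (Hg : 0 <= g <= l) by (unfold g; split; nra).
  replace (c0 * (- k * exp (- k * t))) with (- k * g) by (unfold g; ring).
  replace ((a + b) * g ^ 2 * (1 - g) - g) with (- g * (1 - (a + b) * g * (1 - g))) by ring.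
  rewrite logistic_factor by exact Hr.
  assert ((a + b) * (g - u_minus (a + b)) * (g - u_plus (a + b)) >= k).
  { unfold k, decay_rate.
    replace ((a + b) * (g - u_minus (a + b)) * (g - u_plus (a + b)))
      with ((a + b) * ((u_minus (a + b) - g) * (u_plus (a + b) - g))) by ring.
    replace ((a + b) * (u_minus (a + b) - l) * (u_plus (a + b) - l))
      with ((a + b) * ((u_minus (a + b) - l) * (u_plus (a + b) - l))) by ring.
    apply Rle_ge, Rmult_le_compat_l; [lra|]. apply Rmult_le_compat; lra. }
  nra.
Qed.

Lemma relaxation_supersolution m : a + b >= 4 -> u_plus (a + b) < m < 1 ->
  mf_supersolution a b M (fun _ t =>
    m + (1 - m) * exp (- ((a + b) * m * (m - u_minus (a + b)) * (m - u_plus (a + b))) * t)).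
Proof.
  intros Hr Hm. destruct (u_minus_plus_bounds _ Hr) as [Hum [Hmp Hup]].
  set (k := (a + b) * m * (m - u_minus (a + b)) * (m - u_plus (a + b))).
  assert (Hk : 0 <= k) by (unfold k; repeat apply Rmult_le_pos; lra).
  apply (homogeneous_supersolution _ (fun t => 0 + (1 - m) * (- k * exp (- k * t))));
    [intros t _; apply (derivable_pt_lim_plus (fct_cte m));
      [apply derivable_pt_lim_const
      |apply derivable_pt_lim_scal, derivable_pt_lim_exp_neg_mul]
    |intros t Ht; pose proof (exp_neg_mul_le1 k t Hk Ht); split; nra|].
  intros t Ht. pose proof (exp_neg_mul_le1 k t Hk Ht).
  set (g := m + (1 - m) * exp (- k * t)).
  assert (Hg : m <= g <= 1) by (unfold g; split; nra).
  assert (0 + (1 - m) * (- k * exp (- k * t)) >= - k).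
  { assert (k * ((1 - m) * exp (- k * t)) <= k * 1) by (apply Rmult_le_compat_l; nra). nra. }
  replace ((a + b) * g ^ 2 * (1 - g) - g) with (- g * (1 - (a + b) * g * (1 - g))) by ring.
  rewrite logistic_factor by exact Hr.
  assert ((g - u_minus (a + b)) * (g - u_plus (a + b))
          >= (m - u_minus (a + b)) * (m - u_plus (a + b)))
    by (apply Rle_ge, Rmult_le_compat; lra).
  assert (g * (a + b) * ((g - u_minus (a + b)) * (g - u_plus (a + b))) >= k).
  { unfold k. apply Rle_ge.
    replace ((a + b) * m * (m - u_minus (a + b)) * (m - u_plus (a + b)))
      with (m * (a + b) * ((m - u_minus (a + b)) * (m - u_plus (a + b)))) by ring.
    apply Rmult_le_compat; [apply Rmult_le_pos; lra | apply Rmult_le_pos; lra | |lra].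
    apply Rmult_le_compat_r; lra. }
  nra.
Qed.

(* For [a + b < 4] the reaction term never beats the decay:
   [(a + b) g^2 (1 - g) <= (a + b) g / 4] on [0, 1]. *)
Lemma subcritical_supersolution : a + b < 4 ->
  mf_supersolution a b M (fun _ t => exp (- (1 - (a + b) / 4) * t)).
Proof.
  intros Hr. set (k := 1 - (a + b) / 4).
  assert (Hk : 0 <= k) by (unfold k; lra).
  apply (homogeneous_supersolution _ (fun t => - k * exp (- k * t)));
    [intros t _; apply derivable_pt_lim_exp_neg_mul
    |intros t Ht; pose proof (exp_neg_mul_le1 k t Hk Ht); split; nra|].
  intros t Ht. pose proof (exp_neg_mul_le1 k t Hk Ht).
  set (g := exp (- k * t)).
  assert (Hg : 0 <= g <= 1) by (unfold g; lra).
  assert (0 <= g * (a + b) * ((g - / 2) * (g - / 2))).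
  { apply Rmult_le_pos; [apply Rmult_le_pos; lra | apply Rle_0_sqr]. }
  unfold k.
  assert (- (1 - (a + b) / 4) * g - ((a + b) * g ^ 2 * (1 - g) - g)
          = g * (a + b) * ((g - / 2) * (g - / 2))) by field.
  lra.
Qed.

Lemma eventually_below_high uh : a + b >= 4 -> u_plus (a + b) < uh <= 1 ->
  exists T1, 0 <= T1 /\
  forall w, mf_unit_solution a b M w -> forall x t, T1 <= t -> w x t <= uh.
Proof.
  intros Hr Huh. destruct (u_minus_plus_bounds _ Hr) as [Hum [Hmp Hup]].
  set (m := (u_plus (a + b) + uh) / 2).
  set (lam := (a + b) * m * (m - u_minus (a + b)) * (m - u_plus (a + b))).
  assert (Hlam : lam > 0) by (unfold lam, m; repeat apply Rmult_lt_0_compat; lra).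
  assert (Hq : 0 < (uh - m) / (1 - m)) by (unfold m; apply Rdiv_lt_0_compat; lra).
  pose proof (decay_time_nonneg lam ((uh - m) / (1 - m)) Hlam) as HT1.
  exists (decay_time lam ((uh - m) / (1 - m))). split; [exact HT1|].
  intros w Hw x t Ht.
  eapply Rle_trans.
  - apply (comparison w _ (mf_unit_solution_sub a b M w Hw)
      (relaxation_supersolution m Hr ltac:(unfold m; lra)) 0 (Rle_refl 0)); [|lra].
    intros z. rewrite Rmult_0_r, exp_0. destruct Hw as [_ [_ Hw]]. specialize (Hw z 0 (Rle_refl 0)).
    lra.
  - fold lam. pose proof (exp_le_after_decay_time lam _ t Hlam Hq Ht).
    assert ((1 - m) * exp (- lam * t) <= (1 - m) * ((uh - m) / (1 - m)))
      by (apply Rmult_le_compat_l; unfold m in *; lra).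
    replace ((1 - m) * ((uh - m) / (1 - m))) with (uh - m) in H0 by (field; unfold m; lra).
    lra.
Qed.

(* Below [u_minus] a solution decays exponentially, as long as the region
   where it is small is wide enough to shield it from the outside. *)
Lemma trap_decay ul tau eps : a + b >= 4 -> 0 < ul < u_minus (a + b) -> 0 <= tau -> eps > 0 ->
  forall v, mf_unit_solution a b M v -> forall T x, 0 <= T ->
  (forall z, (Z.abs (z - x) <= propagation_radius a b M
     (decay_time (decay_rate (a + b) ul) (eps / 2 / ul) + tau) (eps / 2))%Z -> v z T <= ul) ->
  forall s, decay_time (decay_rate (a + b) ul) (eps / 2 / ul) <= s <=
            decay_time (decay_rate (a + b) ul) (eps / 2 / ul) + tau ->
  v x (T + s) <= eps.
Proof.
  intros Hr Hul Htau Heps v Hv T x HT Hball s Hs.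
  set (k := decay_rate (a + b) ul) in *.
  assert (Hk : k > 0) by (apply decay_rate_pos; lra).
  pose proof (decay_time_nonneg k (eps / 2 / ul) Hk).
  pose proof (comparison_local (fun x t => v x (t + T)) _
    (decay_time k (eps / 2 / ul) + tau) (eps / 2) ltac:(lra) ltac:(lra)
    (mf_unit_solution_sub a b M _ (mf_unit_solution_shift a b M v T HT Hv))
    (decay_supersolution ul ul Hr ltac:(lra) ltac:(lra)) 0 x (Rle_refl 0)
    ltac:(intros z Hz; cbv beta; rewrite Rmult_0_r, exp_0, Rmult_1_r, Rplus_0_l; apply Hball, Hz)
    s) as Hcmp.
  specialize (Hcmp ltac:(lra)).
  cbv beta in Hcmp. rewrite Rplus_0_l, Rplus_comm in Hcmp. fold k in Hcmp.
  pose proof (exp_le_after_decay_time k (eps / 2 / ul) s Hk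
    ltac:(apply Rdiv_lt_0_compat; lra) ltac:(lra)).
  assert (ul * exp (- k * s) <= ul * (eps / 2 / ul)) by (apply Rmult_le_compat_l; lra).
  replace (ul * (eps / 2 / ul)) with (eps / 2) in H1 by (field; lra).
  lra.
Qed.

End Comparison.

Lemma nat_floor_exists y : 0 <= y -> exists j : nat, INR j <= y < INR j + 1.
Proof.
  intros Hy. destruct (archimed y) as [H1 H2].
  assert (Hu : (1 <= up y)%Z) by (assert (0 < up y)%Z by (apply lt_IZR; lra); lia).
  exists (Z.to_nat (up y - 1)). rewrite INR_IZR_INZ, Z2Nat.id, minus_IZR by lia. lra.
Qed.

Definition small_data_retreat (a b : R) (M : nat) : Prop :=
  exists (u L c : R) (x0 : R -> R),
    u > 0 /\ L > 0 /\ c > 0 /\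
    (a + b < 4 \/ u < u_minus (a + b)) /\
    (forall eps, eps > 0 -> x0 eps > 0) /\
    forall eps, eps > 0 ->
    forall w : Z -> R -> R, mf_solution a b M w ->
      (forall x : Z, 0 <= w x 0 <= 1) ->
      (forall x : Z, Rabs (IZR x) <= L -> w x 0 <= u) ->
      forall t, t > 0 -> forall x : Z, Rabs (IZR x) <= c * t - x0 eps ->
        w x t <= eps.

Lemma subcritical_small_data_retreat a b M : a > 0 -> b > 0 -> (1 <= M)%nat -> a + b < 4 ->
  small_data_retreat a b M.
Proof.
  intros Ha Hb HM Hr. set (k := 1 - (a + b) / 4).
  assert (Hk : k > 0) by (unfold k; lra).
  exists (/ 2), 1, 1, (fun eps => 1 + decay_time k eps).
  split; [lra|]. split; [lra|]. split; [lra|]. split; [left; lra|].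
  split; [intros eps _; pose proof (decay_time_nonneg k eps Hk); lra|].
  intros eps He w Hw H01 _ t Ht x Hx.
  pose proof (Rabs_pos (IZR x)).
  apply Rle_trans with (exp (- k * t)).
  - apply (comparison a b M Ha Hb HM w _
      (mf_unit_solution_sub a b M w (mf_solution_unit a b M Ha Hb HM w Hw H01))
      (subcritical_supersolution a b M Ha Hb HM Hr) 0 (Rle_refl 0)); [|lra].
    intros z. rewrite Rmult_0_r, exp_0. specialize (H01 z). lra.
  - apply exp_le_after_decay_time; lra.
Qed.

Section Retreat.

Variables (a b : R) (M : nat) (ul uh t0 : R) (U : Z -> R -> R).
Hypothesis ha : a > 0.
Hypothesis hb : b > 0.
Hypothesis hM : (1 <= M)%nat.
Hypothesis hr : a + b >= 4.
Hypothesis hul : 0 < ul.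
Hypothesis hul_minus : ul < u_minus (a + b).
Hypothesis huh_plus : u_plus (a + b) < uh.
Hypothesis huh1 : uh <= 1.
Hypothesis hU : mf_unit_solution a b M U.
Hypothesis hU0 : forall x, U x 0 = if Z.ltb x 0 then uh else ul.
Hypothesis ht0 : t0 > 0.
Hypothesis hretreat : U (-1)%Z t0 = ul.

Let hbounds := u_minus_plus_bounds (a + b) hr.

Lemma retreat_le_high x t : 0 <= t -> U x t <= uh.
Proof.
  intros Ht. destruct hbounds as [? [? ?]].
  apply (comparison a b M ha hb hM U _ (mf_unit_solution_sub a b M U hU)
    (constant_supersolution a b M hM uh hr ltac:(lra) ltac:(right; lra)) 0 (Rle_refl 0));
    [|exact Ht].
  intros z. rewrite hU0. destruct (z <? 0)%Z; lra.
Qed.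

Lemma retreat_antitone x y t : (y <= x)%Z -> 0 <= t -> U x t <= U y t.
Proof.
  intros Hxy Ht.
  assert (Hstep : forall z, U (z + 1)%Z t <= U z t).
  { intros z. destruct hbounds as [? [? ?]].
    apply (comparison a b M ha hb hM (fun x t => U (x + 1)%Z t) U
      (mf_unit_solution_sub a b M _ (mf_unit_solution_translate a b M U 1 hU))
      (mf_unit_solution_super a b M U hU) 0 (Rle_refl 0)); [|exact Ht].
    intros z'. rewrite !hU0.
    destruct (Z.ltb_spec (z' + 1) 0), (Z.ltb_spec z' 0); lra || lia. }
  replace x with (y + Z.of_nat (Z.to_nat (x - y)))%Z by lia.
  induction (Z.to_nat (x - y)) as [|n IH]; [rewrite Z.add_0_r; lra|].
  rewrite Nat2Z.inj_succ, <- Z.add_1_r, Z.add_assoc.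
  specialize (Hstep (y + Z.of_nat n)%Z). lra.
Qed.

(* At time [t0] the profile lies below its translate by one site (the
   retreat hypothesis and monotonicity); comparison propagates this. *)
Lemma retreat_step x t : 0 <= t -> U x (t + t0) <= U (x + 1)%Z t.
Proof.
  intros Ht. destruct hbounds as [? [? ?]].
  apply (comparison a b M ha hb hM (fun x t => U x (t + t0)) (fun x t => U (x + 1)%Z t)
    (mf_unit_solution_sub a b M _ (mf_unit_solution_shift a b M U t0 ltac:(lra) hU))
    (mf_unit_solution_super a b M _ (mf_unit_solution_translate a b M U 1 hU))
    0 (Rle_refl 0)); [|exact Ht].
  intros z. cbv beta. rewrite hU0, Rplus_0_l.
  destruct (Z.ltb_spec (z + 1) 0).
  - apply retreat_le_high. lra.
  - rewrite <- hretreat. apply retreat_antitone; [lia | lra].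
Qed.

Lemma retreat_front (j : nat) x : (0 <= x + Z.of_nat j)%Z -> U x (INR j * t0) <= ul.
Proof.
  intros Hx.
  assert (Hsteps : forall (j : nat) x, U x (INR j * t0) <= U (x + Z.of_nat j)%Z 0).
  { clear x Hx. intros j'. induction j' as [|j' IH]; intros x.
    - simpl. rewrite Rmult_0_l, Z.add_0_r. lra.
    - rewrite S_INR, Nat2Z.inj_succ.
      replace ((INR j' + 1) * t0) with (INR j' * t0 + t0) by ring.
      eapply Rle_trans; [apply retreat_step; pose proof (pos_INR j'); nra|].
      replace (x + Z.succ (Z.of_nat j'))%Z with (x + 1 + Z.of_nat j')%Z by lia. apply IH. }
  eapply Rle_trans; [apply Hsteps|]. rewrite hU0.
  destruct (Z.ltb_spec (x + Z.of_nat j) 0); [lia | lra].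
Qed.

Lemma retreat_half : exists tau, tau > 0 /\ forall x, (-1 <= x)%Z -> U x tau <= ul / 2.
Proof.
  set (k := decay_rate (a + b) ul).
  assert (Hk : k > 0) by (apply decay_rate_pos; lra).
  pose proof (decay_time_nonneg k (/ 4) Hk) as Hs.
  set (s := decay_time k (/ 4)) in *.
  pose proof (propagation_radius_nonneg a b M s (ul / 4)) as Hrho.
  set (rho := propagation_radius a b M s (ul / 4)) in *.
  set (T0 := INR (Z.to_nat rho + 1) * t0).
  assert (HT0 : T0 > 0).
  { unfold T0. rewrite plus_INR. simpl. pose proof (pos_INR (Z.to_nat rho)). nra. }
  exists (T0 + s). split; [lra|]. intros x Hx.
  pose proof (comparison_local a b M ha hb hM (fun x t => U x (t + T0)) _ s (ul / 4) Hs
    ltac:(lra) (mf_unit_solution_sub a b M _ (mf_unit_solution_shift a b M U T0 ltac:(lra) hU))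
    (decay_supersolution a b M hM ul ul hr ltac:(lra) hul_minus) 0 x (Rle_refl 0)) as Hcmp.
  specialize (Hcmp ltac:(intros z Hz; cbv beta; rewrite Rmult_0_r, exp_0, Rmult_1_r, Rplus_0_l;
    apply retreat_front; fold rho in Hz; lia) s ltac:(lra)).
  cbv beta in Hcmp. rewrite Rplus_0_l, Rplus_comm in Hcmp. fold k in Hcmp.
  pose proof (exp_le_after_decay_time k (/ 4) s Hk ltac:(lra) (Rle_refl _)).
  assert (ul * exp (- k * s) <= ul * / 4) by (apply Rmult_le_compat_l; lra).
  lra.
Qed.

Section Trap.

Variable tau : R.
Hypothesis htau : tau > 0.
Hypothesis hhalf : forall x, (-1 <= x)%Z -> U x tau <= ul / 2.

(* Below the translate [U (. + R)] of the retreating front, a configuration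
   that is [<= ul] on [[-R, R]] and [<= uh] elsewhere gains one site on the
   left after time [tau]; the right side follows by reflection. *)
Lemma trap_advance_left v : mf_unit_solution a b M v -> forall T (R0 : Z), 0 <= T ->
  (propagation_radius a b M tau (ul / 2) <= R0)%Z ->
  (forall x, v x T <= uh) -> (forall x, (Z.abs x <= R0)%Z -> v x T <= ul) ->
  forall x, (- R0 - 1 <= x <= R0 - propagation_radius a b M tau (ul / 2))%Z ->
  v x (T + tau) <= ul.
Proof.
  intros Hv T R0 HT HR Hhigh Hlow x Hx.
  pose proof (comparison_local a b M ha hb hM (fun x t => v x (t + T)) (fun x t => U (x + R0)%Z t)
    tau (ul / 2) ltac:(lra) ltac:(lra)
    (mf_unit_solution_sub a b M _ (mf_unit_solution_shift a b M v T HT Hv))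
    (mf_unit_solution_super a b M _ (mf_unit_solution_translate a b M U R0 hU))
    0 x (Rle_refl 0)) as Hcmp.
  specialize (Hcmp ltac:(intros z Hz; cbv beta; rewrite Rplus_0_l, hU0;
    destruct (Z.ltb_spec (z + R0) 0); [apply Hhigh | apply Hlow; lia]) tau ltac:(lra)).
  cbv beta in Hcmp. rewrite Rplus_0_l, Rplus_comm in Hcmp.
  pose proof (hhalf (x + R0)%Z ltac:(lia)). lra.
Qed.

Lemma trap_advance v : mf_unit_solution a b M v -> forall T (R0 : Z), 0 <= T ->
  (propagation_radius a b M tau (ul / 2) <= R0)%Z ->
  (forall x, v x T <= uh) -> (forall x, (Z.abs x <= R0)%Z -> v x T <= ul) ->
  (forall x, v x (T + tau) <= uh) /\
  (forall x, (Z.abs x <= R0 + 1)%Z -> v x (T + tau) <= ul).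
Proof.
  intros Hv T R0 HT HR Hhigh Hlow.
  pose proof (propagation_radius_nonneg a b M tau (ul / 2)).
  destruct hbounds as [? [? ?]]. split.
  - intros x. apply (comparison a b M ha hb hM v _ (mf_unit_solution_sub a b M v Hv)
      (constant_supersolution a b M hM uh hr ltac:(lra) ltac:(right; lra)) T HT Hhigh); lra.
  - intros x Hx.
    destruct (Z_le_gt_dec x (R0 - propagation_radius a b M tau (ul / 2))) as [Hleft|Hright].
    + apply (trap_advance_left v Hv T R0 HT HR Hhigh Hlow). lia.
    + rewrite <- (Z.opp_involutive x).
      apply (trap_advance_left (fun x t => v (- x)%Z t) (mf_unit_solution_reflect a b M v Hv)
        T R0 HT HR (fun x => Hhigh (- x)%Z)
        ltac:(intros z Hz; apply Hlow; lia) (- x)%Z ltac:(lia)).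
Qed.

Lemma trap_advance_iter v : mf_unit_solution a b M v -> forall T (R0 : Z), 0 <= T ->
  (propagation_radius a b M tau (ul / 2) <= R0)%Z ->
  (forall x, v x T <= uh) -> (forall x, (Z.abs x <= R0)%Z -> v x T <= ul) ->
  forall (j : nat) x, (Z.abs x <= R0 + Z.of_nat j)%Z -> v x (T + INR j * tau) <= ul.
Proof.
  intros Hv T R0 HT HR Hhigh Hlow j.
  enough (Hboth : (forall x, v x (T + INR j * tau) <= uh) /\
                  (forall x, (Z.abs x <= R0 + Z.of_nat j)%Z -> v x (T + INR j * tau) <= ul))
    by apply Hboth.
  induction j as [|j [IHhigh IHlow]].
  - simpl. rewrite Rmult_0_l, Rplus_0_r, Z.add_0_r. split; assumption.
  - rewrite S_INR, Nat2Z.inj_succ.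
    replace (T + (INR j + 1) * tau) with (T + INR j * tau + tau) by ring.
    destruct (trap_advance v Hv (T + INR j * tau) (R0 + Z.of_nat j)
      ltac:(pose proof (pos_INR j); nra) ltac:(lia) IHhigh IHlow) as [Hhigh' Hlow'].
    split; [exact Hhigh'|]. intros x Hx. apply Hlow'. lia.
Qed.

End Trap.

Lemma retreat_trap : exists tau T1 (L R0 : Z), tau > 0 /\ 0 <= T1 /\ (0 < L)%Z /\ (0 <= R0)%Z /\
  forall w, mf_unit_solution a b M w -> (forall x, (Z.abs x <= L)%Z -> w x 0 <= ul / 2) ->
  forall (j : nat) x, (Z.abs x <= R0 + Z.of_nat j)%Z -> w x (T1 + INR j * tau) <= ul.
Proof.
  destruct retreat_half as [tau [Htau Hhalf]].
  destruct (eventually_below_high a b M ha hb hM uh hr ltac:(lra)) as [T1 [HT1 Hhigh]].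
  set (R0 := propagation_radius a b M tau (ul / 2)).
  set (rho := propagation_radius a b M T1 (ul / 2)).
  pose proof (propagation_radius_nonneg a b M tau (ul / 2)).
  pose proof (propagation_radius_nonneg a b M T1 (ul / 2)).
  destruct hbounds as [? [? ?]].
  exists tau, T1, (R0 + rho + 1)%Z, R0. split; [exact Htau|]. split; [exact HT1|].
  split; [lia|]. split; [lia|]. intros w Hw Hinit.
  apply (trap_advance_iter tau Htau Hhalf w Hw T1 R0 HT1 (Z.le_refl _)).
  - intros x. apply (Hhigh w Hw). lra.
  - intros x Hx.
    pose proof (comparison_local a b M ha hb hM w _ T1 (ul / 2) HT1 ltac:(lra)
      (mf_unit_solution_sub a b M w Hw)
      (constant_supersolution a b M hM (ul / 2) hr ltac:(lra) ltac:(left; lra))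
      0 x (Rle_refl 0) ltac:(intros z Hz; apply Hinit; fold rho in Hz; lia)
      T1 ltac:(lra)) as Hcmp.
    rewrite Rplus_0_l in Hcmp. lra.
Qed.

Lemma retreat_small_data_retreat : small_data_retreat a b M.
Proof.
  destruct retreat_trap as [tau [T1 [L [R0 [Htau [HT1 [HL [HR0 Htrap]]]]]]]].
  set (S := fun eps => decay_time (decay_rate (a + b) ul) (eps / 2 / ul)).
  set (rho := fun eps => propagation_radius a b M (S eps + tau) (eps / 2)).
  assert (HS : forall eps, 0 <= S eps)
    by (intros eps; apply decay_time_nonneg, decay_rate_pos; lra).
  assert (Hrho : forall eps, 0 <= IZR (rho eps))
    by (intros eps; apply IZR_le, propagation_radius_nonneg).
  exists (ul / 2), (IZR L), (/ tau), (fun eps => (S eps + T1) / tau + 2 + IZR (rho eps)).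
  split; [lra|]. split; [apply IZR_lt; exact HL|]. split; [apply Rinv_0_lt_compat; lra|].
  split; [right; lra|].
  split.
  { intros eps _. specialize (HS eps). specialize (Hrho eps).
    assert (0 <= (S eps + T1) / tau) by (apply Rle_mult_inv_pos; lra). lra. }
  intros eps Heps w Hsol H01 Hinit t Ht x Hx.
  pose proof (mf_solution_unit a b M ha hb hM w Hsol H01) as Hw.
  (* [j] counts the trap advances completed before the final decay phase. *)
  set (y := (t - S eps - T1) / tau).
  assert (Hxy : Rabs (IZR x) + IZR (rho eps) + 2 <= y)
    by (unfold y; replace ((t - S eps - T1) / tau) with (/ tau * t - (S eps + T1) / tau)
          by (field; lra); lra).
  pose proof (Rabs_pos (IZR x)). specialize (Hrho eps).
  destruct (nat_floor_exists y ltac:(lra)) as [j [Hj1 Hj2]].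
  set (Tj := T1 + INR j * tau).
  assert (HTj : 0 <= Tj) by (unfold Tj; pose proof (pos_INR j); nra).
  assert (Hyt : y * tau = t - S eps - T1) by (unfold y; field; lra).
  assert (Hs : S eps <= t - Tj <= S eps + tau).
  { unfold Tj. assert (INR j * tau <= y * tau) by (apply Rmult_le_compat_r; lra).
    assert (y * tau <= (INR j + 1) * tau) by (apply Rmult_le_compat_r; lra). lra. }
  replace t with (Tj + (t - Tj)) by ring.
  apply (trap_decay a b M ha hb hM ul tau eps hr ltac:(lra) ltac:(lra) Heps w Hw Tj x HTj);
    [|exact Hs].
  intros z Hz. change (Z.abs (z - x) <= rho eps)%Z in Hz.
  apply (Htrap w Hw); [intros z' Hz'; apply Hinit; rewrite <- abs_IZR; apply IZR_le, Hz'|].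
  assert (Hxj : (Z.abs x + rho eps + 1 < Z.of_nat j)%Z).
  { apply lt_IZR. rewrite !plus_IZR, abs_IZR, <- INR_IZR_INZ. lra. }
  lia.
Qed.

End Retreat.

Theorem lemma9p1 (a b : R) (M : nat) (ha : a > 0) (hb : b > 0) (hM : (1 <= M)%nat) :
  retreat a b M ->
  exists (u L c : R) (x0 : R -> R),
    u > 0 /\ L > 0 /\ c > 0 /\
    (a + b < 4 \/ u < u_minus (a + b)) /\
    (forall eps, eps > 0 -> x0 eps > 0) /\
    forall eps, eps > 0 ->
    forall w : Z -> R -> R, mf_solution a b M w ->
      (forall x : Z, 0 <= w x 0 <= 1) ->
      (forall x : Z, Rabs (IZR x) <= L -> w x 0 <= u) ->
      forall t, t > 0 -> forall x : Z, Rabs (IZR x) <= c * t - x0 eps ->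
        w x t <= eps.
Proof.
  intros [Hsub | [Hr [ul [uh [Hul [Hulm [_ [Huh [Huh1 [U [HU [HU0 [t0 [Ht0 Hret]]]]]]]]]]]]]].
  - exact (subcritical_small_data_retreat a b M ha hb hM Hsub).
  - assert (HUunit : mf_unit_solution a b M U).
    { apply (mf_solution_unit a b M ha hb hM U HU). intros x. rewrite HU0.
      destruct (u_minus_plus_bounds (a + b) Hr) as [? [? ?]]. destruct (x <? 0)%Z; lra. }
    exact (retreat_small_data_retreat a b M ul uh t0 U ha hb hM Hr Hul Hulm Huh Huh1
      HUunit HU0 Ht0 Hret).
Qed.
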